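(* Let $d\ge1$, $P\subseteq\mathbb R\times[d]$, $\alpha\in(0,1]$ and $\beta=1-(1-\alpha)^{1/(2d)}$. Let $\mathcal C_1,\dots,\mathcal C_{2d}$ be finite subfamilies of $\mathcal C_{\equiv}(P)$. If at least $\alpha|\mathcal C_1|\cdots|\mathcal C_{2d}|$ of the colorful $2d$-tuples $(C_1,\dots,C_{2d})\in\mathcal C_1\times\cdots\times\mathcal C_{2d}$ satisfy $C_1\cap\dots\cap C_{2d}\ne\emptyset$, then some $\mathcal C_i$ contains a subfamily of size $\beta|\mathcal C_i|$ whose members have a common point.
   Context: $[d]=\{1,\dots,d\}$. A (separated) $d$-interval is a set $I=\bigcup_{i\in[d]}\{(x,i): x\in I^{(i)}\}\subseteq\mathbb R\times[d]$ with each $I^{(i)}\subseteq\mathbb R$ convex (possibly empty). For $P\subseteq\mathbb R\times[d]$, $\mathcal C_{\equiv}(P)=\{I\cap P: I \text{ a } d\text{-interval}\}$. *)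

From Stdlib Require Import Reals Lra Lia List.
Import ListNotations.
Open Scope R_scope.

(* Points of R x [d]; the colour/index i is a nat, meaningful for 1 <= i <= d. *)
Definition point := (R * nat)%type.
Definition pset := point -> Prop.
Definition empty_pset : pset := fun _ => False.

Definition convexR (S : R -> Prop) : Prop :=
  forall x y z, S x -> S z -> x <= y <= z -> S y.

Definition d_interval (d : nat) (I : pset) : Prop :=
  (forall x i, I (x, i) -> (1 <= i <= d)%nat) /\
  (forall i, convexR (fun x => I (x, i))).

Definition in_Ceq (d : nat) (P : pset) (C : pset) : Prop :=
  exists I, d_interval d I /\ forall p, C p <-> (I p /\ P p).

(* a finite family of sets, listed without repetition (up to set equality) *)
Definition distinct_sets (l : list pset) : Prop :=
  forall i j, (i < length l)%nat -> (j < length l)%nat -> i <> j ->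
    ~ (forall p, nth i l empty_pset p <-> nth j l empty_pset p).

(* real n-th root of x >= 0 (with root 0 = 0) *)
Definition nroot (x : R) (n : nat) : R :=
  if Req_EM_T x 0 then 0 else Rpower x (/ INR n).

(* index tuple t = (t_0,...,t_{m-1}) selecting one member from each family Cs k *)
Definition valid_tuple (m : nat) (Cs : nat -> list pset) (t : list nat) : Prop :=
  length t = m /\ forall k, (k < m)%nat -> (nth k t 0 < length (Cs k))%nat.

Definition tuple_intersects (m : nat) (Cs : nat -> list pset) (t : list nat) : Prop :=
  exists p, forall k, (k < m)%nat -> nth (nth k t 0%nat) (Cs k) empty_pset p.

Definition prod_sizes (m : nat) (Cs : nat -> list pset) : R :=
  fold_right Rmult 1 (map (fun k => INR (length (Cs k))) (seq 0 m)).

(* Suppose, for a contradiction, that every colour class C_k has depth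
   D_k < beta |C_k|, the depth being the largest number of members with a
   common point.  Colours 2i-1 and 2i are paired with the line R x {i}.  On a
   line, two families of relatively convex sets with depths D_A and D_B have
   at least (|A| - D_A)(|B| - D_B) disjoint pairs: the member of A or B with
   the smallest supremum meets at most D_B (resp. D_A) members of the other
   family, since those it meets share a common point; remove it and recurse.
   Choosing a disjoint pair on every line yields
   prod_k (|C_k| - D_k) > (1 - beta)^(2d) prod_k |C_k| = (1 - alpha) prod_k |C_k|
   colourful tuples without a common point, which leaves room for fewer than
   alpha prod_k |C_k| intersecting ones. *)

From Stdlib Require Import Reals Lra Lia List FinFun Classical ClassicalEpsilon.
Import ListNotations.
Open Scope R_scope.

Definition dominated (X Y : R -> Prop) : Prop :=
  forall x, X x -> exists y, Y y /\ x <= y.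

Definition convex_in (Pf X : R -> Prop) : Prop :=
  (forall x, X x -> Pf x) /\
  (forall x y z, X x -> X z -> x <= y <= z -> Pf y -> X y).

Lemma dominated_refl X : dominated X X.
Proof. intros x Hx; exists x; split; [exact Hx | lra]. Qed.

Lemma dominated_trans X Y Z : dominated X Y -> dominated Y Z -> dominated X Z.
Proof.
  intros HXY HYZ x Hx.
  destruct (HXY x Hx) as [y [Hy Hxy]]; destruct (HYZ y Hy) as [z [Hz Hyz]].
  exists z; split; [exact Hz | lra].
Qed.

Lemma dominated_total X Y : ~ dominated X Y -> dominated Y X.
Proof.
  intros HXY y Hy; apply NNPP; intros Hno; apply HXY.
  intros x Hx; exists y; split; [exact Hy |].
  apply Rnot_lt_le; intros Hyx; apply Hno; exists x; split; [exact Hx | lra].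
Qed.

Lemma exists_dominated_min {I : Type} (F : I -> R -> Prop) (l : list I) :
  l <> [] -> exists m, In m l /\ forall j, In j l -> dominated (F m) (F j).
Proof.
  induction l as [|a l IH]; intros Hl; [contradiction |].
  destruct l as [|b l].
  { exists a; split; [now left |]. intros j [<- | []]; apply dominated_refl. }
  destruct IH as [m [Hm Hmin]]; [discriminate |].
  destruct (classic (dominated (F a) (F m))) as [Ham | Hma].
  - exists a; split; [now left |].
    intros j [<- | Hj]; [apply dominated_refl | exact (dominated_trans _ _ _ Ham (Hmin j Hj))].
  - exists m; split; [now right |].
    intros j [<- | Hj]; [exact (dominated_total _ _ Hma) | exact (Hmin j Hj)].
Qed.

Lemma convex_in_reach (Pf X Y : R -> Prop) u m :
  convex_in Pf Y -> (forall x, X x -> Pf x) -> dominated X Y ->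
  X m -> Y u -> u <= m -> Y m.
Proof.
  intros [_ HY] HX Hdom Xm Yu Hum.
  destruct (Hdom m Xm) as [w [Yw Hmw]].
  exact (HY u m w Yu Yw (conj Hum Hmw) (HX m Xm)).
Qed.

(* A one-dimensional Helly property: the largest of the chosen meeting points
   lies in every member of the family that meets X. *)
Lemma common_point_of_dominating {I : Type} (Pf X : R -> Prop) (Y : I -> R -> Prop)
    (l : list I) :
  (forall x, X x -> Pf x) -> (forall j, convex_in Pf (Y j)) ->
  (forall j, In j l -> dominated X (Y j)) ->
  exists q, forall j, In j l -> (exists z, X z /\ Y j z) -> X q /\ Y j q.
Proof.
  intros HX HY; induction l as [|a l IH]; intros Hdom.
  { exists 0; intros j []. }
  destruct IH as [q Hq]; [intros j Hj; apply Hdom; now right |].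
  destruct (classic (exists z, X z /\ Y a z)) as [[z [Xz Yz]] | Ha].
  2: { exists q; intros j [<- | Hj] Hm; [contradiction | exact (Hq j Hj Hm)]. }
  destruct (classic (exists j, In j l /\ exists z, X z /\ Y j z)) as [[j [Hj Hm]] | Hl].
  2: { exists z; intros j [<- | Hj] Hm; [split; assumption | exfalso; eauto]. }
  assert (Xmax : X (Rmax q z)).
  { unfold Rmax; destruct Rle_dec; [exact Xz | exact (proj1 (Hq j Hj Hm))]. }
  exists (Rmax q z); intros j' [<- | Hj'] Hm'; split; try exact Xmax.
  - apply (convex_in_reach Pf X (Y a) z); auto using Rmax_r; apply Hdom; now left.
  - apply (convex_in_reach Pf X (Y j') q); auto using Rmax_l.
    + apply Hdom; now right.
    + exact (proj2 (Hq j' Hj' Hm')).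
Qed.

Section DisjointPairs.

Variables (I : Type) (Pf : R -> Prop).
Implicit Types (A B : I -> R -> Prop) (SA SB : list I).

Definition depth_le A SA (D : nat) : Prop :=
  forall x J, NoDup J -> incl J SA -> (forall j, In j J -> A j x) -> (length J <= D)%nat.

Definition disjoint_pairs A B SA SB (G : list (I * I)) : Prop :=
  NoDup G /\
  forall a b, In (a, b) G -> In a SA /\ In b SB /\ forall x, ~ (A a x /\ B b x).

Definition many_disjoint_pairs A B SA SB (Da Db : nat) : Prop :=
  exists G, disjoint_pairs A B SA SB G /\
    ((length SA - Da) * (length SB - Db) <= length G)%nat.

Lemma depth_le_incl A SA SA' D : incl SA' SA -> depth_le A SA D -> depth_le A SA' D.
Proof. intros Hincl HD x J NJ HJ; apply (HD x J NJ); eapply incl_tran; eauto. Qed.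

Lemma many_disjoint_pairs_swap A B SA SB Da Db :
  many_disjoint_pairs A B SA SB Da Db -> many_disjoint_pairs B A SB SA Db Da.
Proof.
  intros [G [[NG HG] LG]]; exists (map (fun p => (snd p, fst p)) G); split; [split |].
  - apply Injective_map_NoDup; [intros [a b] [a' b'] E; now injection E as -> -> | exact NG].
  - intros b a H; apply in_map_iff in H as [[a' b'] [E H]]; injection E as -> ->.
    destruct (HG a b H) as (Ha & Hb & Hab); repeat split; auto.
    intros x [Hbx Hax]; exact (Hab x (conj Hax Hbx)).
  - rewrite length_map, Nat.mul_comm; exact LG.
Qed.

Lemma many_disjoint_pairs_nil A B SB Da Db : many_disjoint_pairs A B [] SB Da Db.
Proof. exists []; split; [split; [constructor | intros a b []] | simpl; lia]. Qed.

(* The member A a has the smallest supremum, so the members of B meeting it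
   share a common point: at most Db of them meet it. *)
Lemma many_disjoint_pairs_peel A B u a v SB Da Db :
  (forall x, A a x -> Pf x) -> (forall b, convex_in Pf (B b)) ->
  NoDup (u ++ a :: v) -> NoDup SB -> depth_le B SB Db ->
  (forall b, In b SB -> dominated (A a) (B b)) ->
  many_disjoint_pairs A B (u ++ v) SB Da Db ->
  many_disjoint_pairs A B (u ++ a :: v) SB Da Db.
Proof.
  intros HAa HB NA NB DB Hdom [G [[NG HG] LG]].
  destruct (common_point_of_dominating Pf (A a) B SB HAa HB Hdom) as [q Hq].
  set (meets := fun b =>
    if excluded_middle_informative (exists x, A a x /\ B b x) then true else false).
  set (far := filter (fun b => negb (meets b)) SB).
  assert (Hnear : (length (filter meets SB) <= Db)%nat).
  { apply (DB q); [apply NoDup_filter, NB | intros b Hb; apply filter_In in Hb; tauto |].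
    intros b Hb; apply filter_In in Hb as [Hb Hm]; unfold meets in Hm.
    destruct excluded_middle_informative as [Hm' |]; [exact (proj2 (Hq b Hb Hm')) | discriminate]. }
  exists (map (pair a) far ++ G); split; [split |].
  - apply NoDup_app; [| exact NG |].
    + apply Injective_map_NoDup; [intros b b' E; now injection E | apply NoDup_filter, NB].
    + intros [a' b] H1 H2; apply in_map_iff in H1 as [b' [E _]]; injection E as <- _.
      exact (NoDup_remove_2 _ _ _ NA (proj1 (HG a b H2))).
  - intros a' b H; apply in_app_iff in H as [H | H].
    + apply in_map_iff in H as [b' [E Hb]]; injection E as <- <-.
      apply filter_In in Hb as [Hb Hfar]; unfold meets in Hfar.
      repeat split; [apply in_elt | exact Hb |].
      intros x Hx; destruct excluded_middle_informative as [_ | Hn]; [discriminate | eauto].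
    + destruct (HG a' b H) as (Ha & Hb & Hab); repeat split; auto.
      apply in_app_iff in Ha; apply in_app_iff; simpl; tauto.
  - rewrite !length_app, length_map in *; simpl in *.
    pose proof (filter_length meets SB); unfold far; nia.
Qed.

Lemma many_disjoint_pairs_of_depth A B SA SB Da Db :
  (forall a, convex_in Pf (A a)) -> (forall b, convex_in Pf (B b)) ->
  NoDup SA -> NoDup SB -> depth_le A SA Da -> depth_le B SB Db ->
  many_disjoint_pairs A B SA SB Da Db.
Proof.
  remember (S (length SA + length SB)) as n eqn:En.
  assert (Hn : (length SA + length SB < n)%nat) by lia; clear En.
  revert A B SA SB Da Db Hn.
  induction n as [|n IH]; intros A B SA SB Da Db Hn HA HB NA NB DA DB; [lia |].
  destruct SA as [|a0 SA0]; [apply many_disjoint_pairs_nil |].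
  destruct SB as [|b0 SB0]; [apply many_disjoint_pairs_swap, many_disjoint_pairs_nil |].
  destruct (exists_dominated_min A (a0 :: SA0)) as [a [Ha Hmina]]; [discriminate |].
  destruct (exists_dominated_min B (b0 :: SB0)) as [b [Hb Hminb]]; [discriminate |].
  destruct (classic (dominated (A a) (B b))) as [Hab | Hba].
  - destruct (in_split _ _ Ha) as (u & v & E); rewrite E in Hn, NA, DA |- *.
    apply many_disjoint_pairs_peel; auto; [apply HA | |].
    + intros b' Hb'; exact (dominated_trans _ _ _ Hab (Hminb b' Hb')).
    + apply IH; auto; [rewrite length_app in *; simpl in *; lia | |].
      * exact (NoDup_remove_1 _ _ _ NA).
      * apply (depth_le_incl A (u ++ a :: v)); auto.
        intros x Hx; apply in_app_iff in Hx; apply in_app_iff; simpl; tauto.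
  - apply dominated_total in Hba.
    destruct (in_split _ _ Hb) as (u & v & E); rewrite E in Hn, NB, DB |- *.
    apply many_disjoint_pairs_swap, many_disjoint_pairs_peel; auto; [apply HB | |].
    + intros a' Ha'; exact (dominated_trans _ _ _ Hba (Hmina a' Ha')).
    + apply many_disjoint_pairs_swap, IH; auto; [rewrite length_app in *; simpl in *; lia | |].
      * exact (NoDup_remove_1 _ _ _ NB).
      * apply (depth_le_incl B (u ++ b :: v)); auto.
        intros x Hx; apply in_app_iff in Hx; apply in_app_iff; simpl; tauto.
Qed.

End DisjointPairs.

Fixpoint choices {A : Type} (Ls : list (list A)) : list (list A) :=
  match Ls with
  | [] => [[]]
  | L :: Ls' => map (fun p => fst p :: snd p) (list_prod L (choices Ls'))
  end.

Lemma in_choices {A : Type} (x0 : A) Ls t :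
  In t (choices Ls) <->
  length t = length Ls /\
  forall k, (k < length Ls)%nat -> In (nth k t x0) (nth k Ls []).
Proof.
  revert t; induction Ls as [|L Ls IH]; intros t; simpl.
  - split; [intros [<- | []]; split; [reflexivity | intros; lia] |].
    intros [Lt _]; destruct t; [now left | discriminate].
  - rewrite in_map_iff; split.
    + intros [[x t'] [<- Hin]]; apply in_prod_iff in Hin as [Hx Ht'].
      apply IH in Ht' as [Lt Ht']; simpl; split; [lia |].
      intros [|k] Hk; [exact Hx | apply Ht'; lia].
    + intros [Lt Ht]; destruct t as [|x t']; [discriminate |].
      exists (x, t'); split; [reflexivity |]; apply in_prod_iff; split.
      * apply (Ht 0%nat); lia.
      * apply IH; split; [simpl in Lt; lia |]; intros k Hk; apply (Ht (S k)); lia.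
Qed.

Lemma NoDup_list_prod {A B : Type} (l : list A) (l' : list B) :
  NoDup l -> NoDup l' -> NoDup (list_prod l l').
Proof.
  intros Nl Nl'; induction Nl as [|a l Ha Nl IH]; simpl; [constructor |].
  apply NoDup_app; [| exact IH |].
  - apply Injective_map_NoDup; [intros b b' E; now injection E | exact Nl'].
  - intros [a' b] H1 H2; apply in_map_iff in H1 as [b' [E _]]; injection E as <- _.
    apply in_prod_iff in H2; tauto.
Qed.

Lemma NoDup_choices {A : Type} (Ls : list (list A)) :
  (forall L, In L Ls -> NoDup L) -> NoDup (choices Ls).
Proof.
  induction Ls as [|L Ls IH]; intros HN; simpl; [repeat constructor; intros [] |].
  apply Injective_map_NoDup.
  - intros [x t] [x' t'] E; now injection E as -> ->.
  - apply NoDup_list_prod; [apply HN; now left | apply IH; intros L' HL'; apply HN; now right].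
Qed.

Lemma length_choices {A : Type} (Ls : list (list A)) :
  length (choices Ls) = fold_right Nat.mul 1%nat (map (@length A) Ls).
Proof.
  induction Ls as [|L Ls IH]; simpl; [reflexivity |].
  now rewrite length_map, length_prod, IH.
Qed.

Fixpoint flatten_pairs {A : Type} (ps : list (A * A)) : list A :=
  match ps with
  | [] => []
  | (a, b) :: ps' => a :: b :: flatten_pairs ps'
  end.

Lemma length_flatten_pairs {A : Type} (ps : list (A * A)) :
  length (flatten_pairs ps) = (2 * length ps)%nat.
Proof. induction ps as [|[a b] ps IH]; simpl; lia. Qed.

Lemma flatten_pairs_inj {A : Type} : Injective (@flatten_pairs A).
Proof.
  intros ps; induction ps as [|[a b] ps IH]; intros [|[a' b'] ps'] E; try discriminate;
    [reflexivity |].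
  simpl in E; injection E as -> -> E; now rewrite (IH ps' E).
Qed.

Lemma nth_flatten_pairs_even {A : Type} (ps : list (A * A)) i x0 :
  nth (2 * i) (flatten_pairs ps) x0 = fst (nth i ps (x0, x0)).
Proof.
  revert i; induction ps as [|[a b] ps IH]; intros [|i]; try reflexivity.
  replace (2 * S i)%nat with (S (S (2 * i))) by lia; apply IH.
Qed.

Lemma nth_flatten_pairs_odd {A : Type} (ps : list (A * A)) i x0 :
  nth (2 * i + 1) (flatten_pairs ps) x0 = snd (nth i ps (x0, x0)).
Proof.
  revert i; induction ps as [|[a b] ps IH]; intros [|i]; try reflexivity.
  replace (2 * S i + 1)%nat with (S (S (2 * i + 1))) by lia; apply IH.
Qed.

Lemma nth_map_seq {A : Type} (F : nat -> A) m k dflt :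
  (k < m)%nat -> nth k (map F (seq 0 m)) dflt = F k.
Proof.
  intros Hk; rewrite nth_indep with (d' := F 0%nat) by (rewrite length_map, length_seq; lia).
  now rewrite map_nth, seq_nth.
Qed.

Definition prodn (f : nat -> nat) (l : list nat) : nat := fold_right Nat.mul 1%nat (map f l).
Definition prodr (f : nat -> R) (l : list nat) : R := fold_right Rmult 1 (map f l).

Lemma prodn_le_mono (f g : nat -> nat) l :
  (forall k, In k l -> (f k <= g k)%nat) -> (prodn f l <= prodn g l)%nat.
Proof.
  induction l as [|k l IH]; intros H; unfold prodn in *; simpl; [lia |].
  apply Nat.mul_le_mono; [apply H; now left | apply IH; intros k' Hk'; apply H; now right].
Qed.

Lemma prodn_seq_double (f : nat -> nat) s r :
  prodn f (seq (2 * s) (2 * r)) = prodn (fun i => f (2 * i) * f (2 * i + 1))%nat (seq s r).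
Proof.
  revert s; induction r as [|r IH]; intros s; [reflexivity |].
  replace (2 * S r)%nat with (S (S (2 * r))) by lia.
  unfold prodn in *; cbn [seq map fold_right].
  replace (S (S (2 * s))) with (2 * S s)%nat by lia.
  replace (S (2 * s)) with (2 * s + 1)%nat by lia.
  rewrite IH; apply Nat.mul_assoc.
Qed.

Lemma prodr_INR (g : nat -> nat) l : prodr (fun k => INR (g k)) l = INR (prodn g l).
Proof.
  induction l as [|k l IH]; [reflexivity |]; unfold prodr, prodn in *; simpl.
  now rewrite IH, mult_INR.
Qed.

Lemma prodr_nonneg (f : nat -> R) l : (forall k, In k l -> 0 <= f k) -> 0 <= prodr f l.
Proof.
  induction l as [|k l IH]; intros H; unfold prodr; simpl; [lra |].
  apply Rmult_le_pos; [apply H; now left | apply IH; intros k' Hk'; apply H; now right].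
Qed.

Lemma prodr_lt (f g : nat -> R) l :
  l <> [] -> (forall k, In k l -> 0 <= f k < g k) -> prodr f l < prodr g l.
Proof.
  induction l as [|k l IH]; intros Hl H; [contradiction |].
  unfold prodr; simpl; fold (prodr f l) (prodr g l).
  destruct (H k (or_introl eq_refl)) as [Hf Hfg].
  assert (Hl0 : 0 <= prodr f l) by (apply prodr_nonneg; intros k' Hk'; apply H; now right).
  destruct l as [|k' l']; [unfold prodr; simpl; lra |].
  assert (Hlt : prodr f (k' :: l') < prodr g (k' :: l'))
    by (apply IH; [discriminate | intros j Hj; apply H; now right]).
  nra.
Qed.

Lemma prodr_scale (c : R) (f : nat -> R) l :
  prodr (fun k => c * f k) l = c ^ length l * prodr f l.
Proof. induction l as [|k l IH]; unfold prodr in *; simpl; [lra |]; rewrite IH; ring. Qed.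

Lemma nroot_nonneg x n : 0 <= nroot x n.
Proof. unfold nroot; destruct Req_EM_T; [lra | unfold Rpower; left; apply exp_pos]. Qed.

Lemma nroot_pow x n : 0 <= x -> (0 < n)%nat -> nroot x n ^ n = x.
Proof.
  intros Hx Hn; unfold nroot; destruct Req_EM_T as [E | E]; [subst; now apply pow_i |].
  rewrite <- Rpower_pow by (unfold Rpower; apply exp_pos).
  rewrite Rpower_mult, Rinv_l, Rpower_1; [reflexivity | lra | apply not_0_INR; lia].
Qed.

Lemma exists_max_nat (Q : nat -> Prop) N :
  Q 0%nat -> (forall n, Q n -> (n <= N)%nat) ->
  exists D, Q D /\ forall n, Q n -> (n <= D)%nat.
Proof.
  revert Q; induction N as [|N IH]; intros Q HQ0 Hle.
  - exists 0%nat; split; [exact HQ0 | exact Hle].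
  - destruct (classic (Q (S N))) as [HQ | HQ]; [exists (S N); split; [exact HQ | exact Hle] |].
    apply IH; [exact HQ0 |]; intros n Hn; specialize (Hle n Hn).
    destruct (Nat.eq_dec n (S N)) as [-> | ]; [contradiction | lia].
Qed.

Definition pierced (Cl : list pset) (p : point) (J : list nat) : Prop :=
  NoDup J /\ (forall j, In j J -> (j < length Cl)%nat) /\
  forall j, In j J -> nth j Cl empty_pset p.

Lemma pierced_length_le Cl p J : pierced Cl p J -> (length J <= length Cl)%nat.
Proof.
  intros (NJ & BJ & _); rewrite <- (length_seq (length Cl) 0).
  apply NoDup_incl_length; [exact NJ |]; intros j Hj; apply in_seq; specialize (BJ j Hj); lia.
Qed.

Lemma exists_depth (Cl : list pset) (b : R) :
  (forall p J, pierced Cl p J -> INR (length J) < b) ->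
  exists D, (D <= length Cl)%nat /\ INR D < b /\
    forall p J, pierced Cl p J -> (length J <= D)%nat.
Proof.
  intros Hb.
  destruct (exists_max_nat (fun n => exists p J, pierced Cl p J /\ length J = n) (length Cl))
    as [D [(p & J & HJ & <-) Hmax]].
  - exists (0, 0%nat), []; repeat split; [constructor | intros j [] ..].
  - intros n (p & J & HJ & <-); exact (pierced_length_le _ _ _ HJ).
  - exists (length J); repeat split; [exact (pierced_length_le _ _ _ HJ) | exact (Hb p J HJ) |].
    intros p' J' HJ'; apply Hmax; eauto.
Qed.

Lemma exists_depths (m : nat) (Cs : nat -> list pset) (b : nat -> R) :
  (forall k p J, (k < m)%nat -> pierced (Cs k) p J -> INR (length J) < b k) ->
  exists D : nat -> nat, forall k, (k < m)%nat ->
    (D k <= length (Cs k))%nat /\ INR (D k) < b k /\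
    forall p J, pierced (Cs k) p J -> (length J <= D k)%nat.
Proof.
  intros Hb; apply (choice (fun k Dk => (k < m)%nat -> (Dk <= length (Cs k))%nat /\
    INR Dk < b k /\ forall p J, pierced (Cs k) p J -> (length J <= Dk)%nat)).
  intros k; destruct (Compare_dec.lt_dec k m) as [Hk | Hk]; [| exists 0%nat; lia].
  destruct (exists_depth (Cs k) (b k)) as [Dk HDk]; [| exists Dk; intros _; exact HDk].
  intros p J; apply Hb, Hk.
Qed.

Definition fibre (Cl : list pset) (i j : nat) (x : R) : Prop := nth j Cl empty_pset (x, i).

Lemma fibre_convex_in d P Cl i j :
  (forall C, In C Cl -> in_Ceq d P C) -> convex_in (fun x => P (x, i)) (fibre Cl i j).
Proof.
  intros HCl; unfold fibre; destruct (nth_in_or_default j Cl empty_pset) as [Hin | ->].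
  - destruct (HCl _ Hin) as [Iv [[_ HI] HC]]; split.
    + intros x Hx; apply HC in Hx; tauto.
    + intros x y z Hx Hz Hxyz Py; apply HC in Hx, Hz; apply HC.
      split; [apply (HI i x y z); tauto | exact Py].
  - split; intros; contradiction.
Qed.

Lemma member_index d P Cl j x i :
  (forall C, In C Cl -> in_Ceq d P C) -> nth j Cl empty_pset (x, i) -> (1 <= i <= d)%nat.
Proof.
  intros HCl; destruct (nth_in_or_default j Cl empty_pset) as [Hin | ->]; [| contradiction].
  intros Hx; destruct (HCl _ Hin) as [Iv [[HI _] HC]].
  destruct (proj1 (HC _) Hx) as [HIx _]; exact (HI x i HIx).
Qed.

Lemma depth_le_fibre Cl i D :
  (forall p J, pierced Cl p J -> (length J <= D)%nat) ->
  depth_le nat (fibre Cl i) (seq 0 (length Cl)) D.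
Proof.
  intros HD x J NJ HJ Hx; apply (HD (x, i)); repeat split; [exact NJ | | exact Hx].
  intros j Hj; apply HJ, in_seq in Hj; lia.
Qed.

Lemma many_disjoint_fibre_pairs d P Cl1 Cl2 D1 D2 i :
  (forall C, In C Cl1 -> in_Ceq d P C) -> (forall C, In C Cl2 -> in_Ceq d P C) ->
  (forall p J, pierced Cl1 p J -> (length J <= D1)%nat) ->
  (forall p J, pierced Cl2 p J -> (length J <= D2)%nat) ->
  many_disjoint_pairs nat (fibre Cl1 i) (fibre Cl2 i)
    (seq 0 (length Cl1)) (seq 0 (length Cl2)) D1 D2.
Proof.
  intros H1 H2 HD1 HD2.
  apply (many_disjoint_pairs_of_depth nat (fun x => P (x, i)));
    eauto using fibre_convex_in, seq_NoDup, depth_le_fibre.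
Qed.

Section PairedTuples.

Variables (d : nat) (P : pset) (Cs : nat -> list pset) (G : nat -> list (nat * nat)).
Hypothesis HCs : forall k, (k < 2 * d)%nat -> forall C, In C (Cs k) -> in_Ceq d P C.
Hypothesis HG : forall i, (i < d)%nat ->
  disjoint_pairs nat (fibre (Cs (2 * i)) (S i)) (fibre (Cs (2 * i + 1)) (S i))
    (seq 0 (length (Cs (2 * i)))) (seq 0 (length (Cs (2 * i + 1)))) (G i).

Lemma chosen_pair ps i :
  In ps (choices (map G (seq 0 d))) -> (i < d)%nat ->
  (fst (nth i ps (0, 0)%nat) < length (Cs (2 * i)))%nat /\
  (snd (nth i ps (0, 0)%nat) < length (Cs (2 * i + 1)))%nat /\
  forall x, ~ (fibre (Cs (2 * i)) (S i) (fst (nth i ps (0, 0)%nat)) x /\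
               fibre (Cs (2 * i + 1)) (S i) (snd (nth i ps (0, 0)%nat)) x).
Proof.
  intros Hps Hi; apply (in_choices (0, 0)%nat) in Hps as [_ Hps].
  rewrite length_map, length_seq in Hps; specialize (Hps i Hi).
  rewrite nth_map_seq in Hps by exact Hi; destruct (nth i ps (0, 0)%nat) as [a b].
  destruct (proj2 (HG i Hi) a b Hps) as (Ha & Hb & Hab).
  apply in_seq in Ha, Hb; cbn [fst snd]; repeat split; [lia | lia | exact Hab].
Qed.

Lemma paired_tuple_valid ps :
  In ps (choices (map G (seq 0 d))) -> valid_tuple (2 * d) Cs (flatten_pairs ps).
Proof.
  intros Hps; split.
  - apply (in_choices (0, 0)%nat) in Hps as [Lps _].
    rewrite length_flatten_pairs, Lps, length_map, length_seq; reflexivity.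
  - intros k Hk; destruct (Nat.Even_or_Odd k) as [[i ->] | [i ->]].
    + rewrite nth_flatten_pairs_even; apply chosen_pair; [exact Hps | lia].
    + rewrite nth_flatten_pairs_odd; apply chosen_pair; [exact Hps | lia].
Qed.

(* A common point (x, s) would lie in the two members of colours 2(s-1) and
   2(s-1)+1, which were chosen disjoint on the fibre s. *)
Lemma paired_tuple_not_intersects ps :
  (1 <= d)%nat -> In ps (choices (map G (seq 0 d))) ->
  ~ tuple_intersects (2 * d) Cs (flatten_pairs ps).
Proof.
  intros Hd Hps [[x s] Hp].
  assert (Hs : (1 <= s <= d)%nat).
  { apply (member_index d P (Cs 0) (nth 0 (flatten_pairs ps) 0%nat) x s);
      [apply HCs; lia | apply Hp; lia]. }
  destruct (chosen_pair ps (s - 1) Hps) as (_ & _ & Hdisj); [lia |].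
  apply (Hdisj x); unfold fibre; replace (S (s - 1)) with s by lia; split.
  - rewrite <- nth_flatten_pairs_even; apply Hp; lia.
  - rewrite <- nth_flatten_pairs_odd; apply Hp; lia.
Qed.

End PairedTuples.

Lemma many_disjoint_tuples (d : nat) (P : pset) (Cs : nat -> list pset) (D : nat -> nat) :
  (1 <= d)%nat ->
  (forall k, (k < 2 * d)%nat -> forall C, In C (Cs k) -> in_Ceq d P C) ->
  (forall k, (k < 2 * d)%nat -> forall p J, pierced (Cs k) p J -> (length J <= D k)%nat) ->
  exists T, NoDup T /\
    (forall t, In t T -> valid_tuple (2 * d) Cs t /\ ~ tuple_intersects (2 * d) Cs t) /\
    (prodn (fun k => length (Cs k) - D k) (seq 0 (2 * d)) <= length T)%nat.
Proof.
  intros Hd HCs HD.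
  destruct (choice (fun (i : nat) (Gi : list (nat * nat)) => (i < d ->
      disjoint_pairs nat (fibre (Cs (2 * i)) (S i)) (fibre (Cs (2 * i + 1)) (S i))
        (seq 0 (length (Cs (2 * i)))) (seq 0 (length (Cs (2 * i + 1)))) Gi /\
      (length (Cs (2 * i)) - D (2 * i)) * (length (Cs (2 * i + 1)) - D (2 * i + 1))
         <= length Gi)%nat)) as [G HG].
  { intros i; destruct (Compare_dec.lt_dec i d) as [Hi | Hi]; [| exists []; lia].
    destruct (many_disjoint_fibre_pairs d P (Cs (2 * i)%nat) (Cs (2 * i + 1)%nat)
                (D (2 * i)%nat) (D (2 * i + 1)%nat) (S i)) as [Gi HGi];
      [apply HCs; lia | apply HCs; lia | apply HD; lia | apply HD; lia |].
    rewrite !length_seq in HGi; exists Gi; intros _; exact HGi. }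
  exists (map flatten_pairs (choices (map G (seq 0 d)))); split; [| split].
  - apply Injective_map_NoDup; [exact flatten_pairs_inj |]; apply NoDup_choices.
    intros L HL; apply in_map_iff in HL as [i [<- Hi]]; apply in_seq in Hi; apply HG; lia.
  - intros t Ht; apply in_map_iff in Ht as [ps [<- Hps]].
    split; [apply (paired_tuple_valid d Cs G) | apply (paired_tuple_not_intersects d P Cs G)];
      auto; intros i Hi; apply (HG i Hi).
  - rewrite length_map, length_choices, map_map.
    transitivity (prodn (fun i => (length (Cs (2 * i)) - D (2 * i)) *
                                  (length (Cs (2 * i + 1)) - D (2 * i + 1))) (seq 0 d))%nat.
    + apply Nat.eq_le_incl, (prodn_seq_double (fun k => length (Cs k) - D k)%nat 0 d).
    + apply prodn_le_mono; intros i Hi; apply in_seq in Hi; apply HG; lia.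
Qed.

Lemma valid_tuples_length_le (m : nat) (Cs : nat -> list pset) (T : list (list nat)) :
  NoDup T -> (forall t, In t T -> valid_tuple m Cs t) ->
  (length T <= prodn (fun k => length (Cs k)) (seq 0 m))%nat.
Proof.
  intros NT HT; transitivity (length (choices (map (fun k => seq 0 (length (Cs k))) (seq 0 m)))).
  2: { rewrite length_choices, map_map; apply Nat.eq_le_incl; unfold prodn; f_equal.
       apply map_ext; intros k; apply length_seq. }
  apply NoDup_incl_length; [exact NT |]; intros t Ht; destruct (HT t Ht) as [Lt Bt].
  apply (in_choices 0%nat).
  rewrite length_map, length_seq; split; [exact Lt |].
  intros k Hk; rewrite nth_map_seq by exact Hk; apply in_seq; specialize (Bt k Hk); lia.
Qed.

Lemma prod_sizes_gap m (N D : nat -> nat) c :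
  (0 < m)%nat -> 0 <= c ->
  (forall k, (k < m)%nat -> (D k <= N k)%nat /\ INR (D k) < (1 - c) * INR (N k)) ->
  c ^ m * prodr (fun k => INR (N k)) (seq 0 m) < INR (prodn (fun k => N k - D k)%nat (seq 0 m)).
Proof.
  intros Hm Hc HD; rewrite <- prodr_INR.
  rewrite <- (length_seq m 0) at 1; rewrite <- prodr_scale.
  apply prodr_lt; [destruct m; [lia | discriminate] |].
  intros k Hk; apply in_seq in Hk; destruct (HD k ltac:(lia)) as [HDN HDc].
  rewrite minus_INR by exact HDN; split; [apply Rmult_le_pos; [exact Hc | apply pos_INR] | lra].
Qed.

(* Colours k = 0,...,2d-1 stand for the paper's 1,...,2d. *)
Theorem theorem6 (d : nat) (P : pset) (alpha : R) (Cs : nat -> list pset) :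
  (1 <= d)%nat ->
  (forall x i, P (x, i) -> (1 <= i <= d)%nat) ->
  0 < alpha <= 1 ->
  (forall k, (k < 2 * d)%nat ->
     distinct_sets (Cs k) /\ (forall C, In C (Cs k) -> in_Ceq d P C)) ->
  (exists L : list (list nat),
     NoDup L /\
     (forall t, In t L -> valid_tuple (2 * d) Cs t /\ tuple_intersects (2 * d) Cs t) /\
     INR (length L) >= alpha * prod_sizes (2 * d) Cs) ->
  exists k, (k < 2 * d)%nat /\
    exists J : list nat,
      NoDup J /\ (forall j, In j J -> (j < length (Cs k))%nat) /\
      INR (length J) >= (1 - nroot (1 - alpha) (2 * d)) * INR (length (Cs k)) /\
      exists p, forall j, In j J -> nth j (Cs k) empty_pset p.
Proof.
  intros Hd _ Halpha HCs [L (NL & HL & LL)].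
  set (c := nroot (1 - alpha) (2 * d)).
  assert (Hc : 0 <= c) by apply nroot_nonneg.
  assert (Hcpow : c ^ (2 * d) = 1 - alpha) by (apply nroot_pow; [lra | lia]).
  apply NNPP; intros Hno.
  destruct (exists_depths (2 * d) Cs (fun k => (1 - c) * INR (length (Cs k)))) as [D HD].
  { intros k p J Hk (NJ & BJ & PJ); apply Rnot_le_lt; intros Hge.
    apply Hno; exists k; split; [exact Hk |]; exists J; repeat split; eauto; lra. }
  destruct (many_disjoint_tuples d P Cs D) as (T & NT & HT & LT);
    [exact Hd | apply HCs | apply HD |].
  assert (Hall : (length L + length T <= prodn (fun k => length (Cs k)) (seq 0 (2 * d)))%nat).
  { rewrite <- length_app; apply valid_tuples_length_le.
    - apply NoDup_app; [exact NL | exact NT |]; intros t HtL HtT; apply (HT t HtT), HL, HtL.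
    - intros t Ht; apply in_app_iff in Ht as [Ht | Ht]; [apply HL | apply HT]; exact Ht. }
  assert (Hgap := prod_sizes_gap (2 * d) (fun k => length (Cs k)) D c ltac:(lia) Hc
                    (fun k Hk => conj (proj1 (HD k Hk)) (proj1 (proj2 (HD k Hk))))).
  apply le_INR in Hall, LT; rewrite plus_INR, <- prodr_INR in Hall.
  change (prod_sizes (2 * d) Cs) with (prodr (fun k => INR (length (Cs k))) (seq 0 (2 * d))) in LL.
  rewrite Hcpow in Hgap; lra.
Qed.
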